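(* Consider an instance of $P|G=\textit{block graph}|C_{\max}$ with $m$ identical machines, jobs $J=\{J_1,\dots,J_n\}$ with processing times $p_j\in\mathbb{N}$, and block conflict graph $G$ with $\omega(G)\le m$ and with $k$ blocks $B_1,\dots,B_k$ listed in the greedy order described in the context. Run the greedy algorithm described in the context. For $j\in\{0,\dots,k\}$ and each machine $M_i$, let $C_j(M_i)$ be the load of $M_i$ after the first $j$ blocks have been processed, let $C_j=\frac1m\sum_{i=1}^m C_j(M_i)$, and let $p_{\max}=\max_l p_l$. Then for every $i\in\{1,\dots,m\}$ and every $j\in\{0,\dots,k\}$, $$C_j(M_i)\le C_j+\max\{C_j,p_{\max}\}.$$
   Context: Scheduling with a conflict graph: jobs $J=\{J_1,\dots,J_n\}$, machines $M=\{M_1,\dots,M_m\}$, and a conflict graph $G=(J,E)$; a schedule is a map $\sigma:J\to M$ such that adjacent jobs are assigned to different machines. On identical machines ($P$) job $J_j$ has processing time $p_j$ on every machine; the load of a machine is the sum of processing times of jobs assigned to it; the makespan $C_{\max}(\sigma)$ is the maximum load, and $C^{OPT}_{\max}$ is the minimum makespan over all schedules. A block graph is a graph in which every maximal 2-connected component is a clique; a block is a maximal clique; a cut-vertex is a vertex in at least two blocks. The block-cut forest $T_G$ has a node for each block and each cut-vertex, with a block node adjacent to a cut-vertex node iff the cut-vertex lies in the block; each component is rooted arbitrarily. Greedy algorithm: list the blocks in the order of a pre-order traversal of (each component of) the rooted block-cut forest. Process the blocks in this order. For the current block $B$, let $L_J$ be the jobs of $B$ sorted by non-increasing processing time and let $L_M$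 be the $|B|$ machines of smallest current load, sorted by non-decreasing current load (ties broken arbitrarily). If $B$ has a parent cut-vertex $u$ in $T_G$ that has already been assigned to some machine $M'$, then: if $M'\in L_M$ remove $M'$ from $L_M$, otherwise remove the last machine of $L_M$; and remove $u$ from $L_J$. Then assign the $i$-th job of $L_J$ to the $i$-th machine of $L_M$ for $i=1,\dots,|L_M|$, updating loads. *)

From mathcomp Require Import all_boot all_order all_algebra.
Set Implicit Arguments.
Unset Strict Implicit.
Unset Printing Implicit Defensive.
Import Order.TTheory GRing.Theory Num.Theory.

Section BlockGraphScheduling.

Variable n m : nat.
Variable e : rel 'I_n.

Definition clique (S : {set 'I_n}) : bool :=
  [forall x in S, forall y in S, (x != y) ==> e x y].

Definition connected_on (S : {set 'I_n}) : Prop :=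
  forall x y, x \in S -> y \in S ->
    connect (fun a b => [&& a \in S, b \in S & e a b]) x y.

Definition nonsep (S : {set 'I_n}) : Prop :=
  S != set0 /\ connected_on S /\ (forall v, v \in S -> connected_on (S :\ v)).

Definition maxnonsep (S : {set 'I_n}) : Prop :=
  nonsep S /\ (forall S' : {set 'I_n}, S \subset S' -> nonsep S' -> S' = S).

Definition block_graph : Prop := forall S, maxnonsep S -> clique S.

Definition block (B : {set 'I_n}) : bool :=
  [&& clique B, B != set0 & [forall S : {set 'I_n}, (B \proper S) ==> ~~ clique S]].

Definition cutv (v : 'I_n) : bool :=
  1 < #|[set B : {set 'I_n} | block B && (v \in B)]|.

(* Nodes of the block-cut forest: inl B for a block, inr v for a cut-vertex. *)
Definition bcnode := ({set 'I_n} + 'I_n)%type.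

Definition bc_valid (x : bcnode) : bool :=
  match x with inl B => block B | inr v => cutv v end.

Definition bc_adj (x y : bcnode) : bool :=
  match x, y with
  | inl B, inr v => v \in B
  | inr v, inl B => v \in B
  | _, _ => false
  end.

(* par is a rooting of the block-cut forest T_G (each component rooted
   arbitrarily): par x = Some y means y is the parent of x. Every tree edge is
   a parent edge, parent edges are tree edges, and there are no cycles. *)
Definition rooting (par : bcnode -> option bcnode) : Prop :=
  [/\ (forall x y, par x = Some y -> [&& bc_valid x, bc_valid y & bc_adj x y]),
      (forall x y, bc_valid x -> bc_valid y -> bc_adj x y ->
         par x = Some y \/ par y = Some x)
    & exists h : bcnode -> nat, forall x y, par x = Some y -> h y < h x].

Definition descendant (par : bcnode -> option bcnode) (x y : bcnode) : Prop :=
  exists t, iter t (fun o => obind par o) (Some y) = Some x.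

(* s is a pre-order traversal of the rooted forest: it lists every node exactly
   once, and the subtree of every node x occupies a contiguous segment of s
   starting at x. *)
Definition preorder (par : bcnode -> option bcnode) (s : seq bcnode) : Prop :=
  [/\ uniq s,
      (forall x, (x \in s) = bc_valid x)
    & forall x, x \in s ->
        (forall j, j < size s -> descendant par x (nth x s j) -> index x s <= j)
        /\ (forall i j l, i <= j -> j <= l -> l < size s ->
              descendant par x (nth x s i) -> descendant par x (nth x s l) ->
              descendant par x (nth x s j))].

Definition block_order (s : seq bcnode) : seq {set 'I_n} :=
  pmap (fun x => if x is inl B then Some B else None) s.

Definition parent_cv (par : bcnode -> option bcnode) (B : {set 'I_n}) : option 'I_n :=
  match par (inl B) with Some (inr u) => Some u | _ => None end.

Variable p : 'I_n -> nat.

(* partial schedule: job -> (assigned machine) *)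
Definition load (a : {ffun 'I_n -> option 'I_m}) (i : 'I_m) : nat :=
  \sum_(l < n | a l == Some i) p l.

(* One step of the greedy algorithm on block B with parent cut-vertex pu,
   from partial schedule a to a' (ties broken arbitrarily). *)
Definition greedy_step (a a' : {ffun 'I_n -> option 'I_m})
    (B : {set 'I_n}) (pu : option 'I_n) : Prop :=
  exists (LJ : seq 'I_n) (LM : seq 'I_m),
    [/\ perm_eq LJ (enum B),
        sorted (fun x y => p y <= p x) LJ,
        [/\ uniq LM, size LM = #|B| &
        (forall i j, i \in LM -> j \notin LM -> load a i <= load a j)],
        sorted (fun i j => load a i <= load a j) LM
      & (let LJM :=
          match pu with
          | Some u =>
              match a u with
              | Some M' => (rem u LJ,
                            if M' \in LM then rem M' LM
                            else take (size LM).-1 LM)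
              | None => (LJ, LM)
              end
          | None => (LJ, LM)
          end in
        a' = [ffun l => if l \in take (size LJM.2) LJM.1
                        then nth None (map Some LJM.2) (index l LJM.1)
                        else a l])].

Definition greedy_run (par : bcnode -> option bcnode) (s : seq bcnode)
    (st : nat -> {ffun 'I_n -> option 'I_m}) : Prop :=
  st 0 = [ffun => None] /\
  forall j, j < size (block_order s) ->
    greedy_step (st j) (st j.+1) (nth set0 (block_order s) j)
      (parent_cv par (nth set0 (block_order s) j)).

End BlockGraphScheduling.

(* The greedy schedule keeps, for every machine i and every set S of machines
   not containing i,
     (|S| - 1) C(i) <= sum_{k in S} C(k) + (|S| - 1) p_max.
   A block's jobs go, largest first, to machines taken in increasing order of
   load.  These are the least loaded machines, except that the machine holding
   the parent cut-vertex may be passed over; and in a pre-order traversal the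
   parent cut-vertex is the only job of the block scheduled before it.  So the
   machines of S preceding i in that list gain at least as much as i, at most
   one other machine of S is lighter than i, and the remaining ones are at
   least as heavy as i: the invariant for the first two groups and the bound
   C(i) for the third carry the inequality over.  For S = all machines but i
   it rearranges into C(i) <= C + max(C, p_max). *)
From mathcomp Require Import all_boot all_order all_algebra.
From mathcomp Require Import zify.
Import Order.TTheory GRing.Theory Num.Theory.

Set Implicit Arguments.
Unset Strict Implicit.
Unset Printing Implicit Defensive.

Lemma load_assign n m (p : 'I_n -> nat) (a : {ffun 'I_n -> option 'I_m})
    (LJ : seq 'I_n) (LM : seq 'I_m) (k : 'I_m) :
  uniq LJ -> uniq LM -> (size LM <= size LJ)%N ->
  (forall l, l \in LJ -> a l = None) ->
  load p [ffun l => if l \in take (size LM) LJ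
                    then nth None (map Some LM) (index l LJ) else a l] k
  = (load p a k + (if k \in LM then nth 0 (map p LJ) (index k LM) else 0))%N.
Proof.
move=> uJ uM sz fresh.
rewrite /load (bigID (fun l => l \in take (size LM) LJ)) /=.
rewrite [X in (_ = X + _)%N](bigID (fun l => l \in take (size LM) LJ)) /=.
rewrite [X in (_ = X + _ + _)%N]big1; last first.
  by move=> l /andP[/eqP al lt]; move: al; rewrite fresh // (mem_take lt).
rewrite add0n [in RHS]addnC; congr (_ + _)%N; last first.
  by apply: eq_bigl => l; rewrite ffunE; case: (l \in take _ _); rewrite ?andbF.
case: (boolP (k \in LM)) => kM; last first.
  apply: big_pred0 => l; rewrite ffunE; case lt: (l \in take _ _); rewrite ?andbF //.
  rewrite andbT (nth_map k) ?(index_ltn lt) //.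
  by apply/negP => /eqP [e]; move: kM; rewrite -e mem_nth ?(index_ltn lt).
have ikM : (index k LM < size LM)%N by rewrite index_mem.
have ikJ : (index k LM < size LJ)%N by exact: leq_trans ikM sz.
have [l0 _] : exists l0 : 'I_n, true by case: (LJ) ikJ => [//|l0 ?] _; exists l0.
rewrite (nth_map l0) //.
apply: (big_pred1 (nth l0 LJ (index k LM))) => l /=; rewrite ffunE.
case lt: (l \in take _ _); rewrite ?andbF ?andbT; last first.
  apply/esym/negbTE; apply: contraFN lt => /eqP ->.
  by rewrite in_take_leq // index_uniq.
have il := index_ltn lt; rewrite (nth_map k) //.
apply/eqP/eqP => [[e]|->]; last by rewrite index_uniq // nth_index.
have : nth k LM (index l LJ) = nth k LM (index k LM) by rewrite nth_index.
by move/eqP; rewrite nth_uniq // => /eqP <-; rewrite nth_index ?(mem_take lt).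
Qed.

Definition balanced (m P : nat) (lam : 'I_m -> nat) : Prop :=
  forall i (S : {set 'I_m}), i \notin S ->
    (#|S|.-1 * lam i <= \sum_(k in S) lam k + #|S|.-1 * P)%N.

(* In [balanced_add]: [u] machines of [S] are lighter than [i] or precede it,
   [a] of them precede it and gain at least the [x] that [i] gains, and the
   other [h] are at least as heavy as [i]; [sig12] is the old load of the [u]
   machines and [sig] the new load of [S]. *)
Lemma balanced_split_arith (u h a L x P sig12 sig : nat) :
  (u <= a + 1)%N -> (x <= P)%N -> (a <= u)%N ->
  (u.-1 * L <= sig12 + u.-1 * P)%N ->
  (sig12 + a * x + h * L <= sig)%N ->
  ((u + h).-1 * (L + x) <= sig + (u + h).-1 * P)%N.
Proof.
case: u => [|u] /= Hua HxP Hau IH Hs.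
  by case: h Hs => [|h] //= Hs; rewrite mulnDr; nia.
rewrite ?addSn /=.
have : (u * x <= a * x)%N by apply: leq_mul; lia.
have : (h * x <= h * P)%N by apply: leq_mul.
nia.
Qed.

Section BalancedAdd.

Variables (m P : nat) (lam lam' x : 'I_m -> nat) (LM : seq 'I_m) (skipped : option 'I_m).

Hypothesis lam_sorted : forall k k', k \in LM -> k' \in LM ->
  (index k LM <= index k' LM)%N -> (lam k <= lam k')%N.
Hypothesis x_bounded : forall k, k \in LM -> (x k <= P)%N.
Hypothesis x_sorted : forall k k', k \in LM -> k' \in LM ->
  (index k LM <= index k' LM)%N -> (x k' <= x k)%N.
Hypothesis lam_min : forall k k', k \in LM -> k' \notin LM -> Some k' != skipped ->
  (lam k <= lam k')%N.

Hypothesis lam'E : forall k, lam' k = (lam k + (if k \in LM then x k else 0))%N.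

Let precedes i k := (k \in LM) && (index k LM < index i LM)%N.

Lemma card_lighter_not_preceding i : i \in LM ->
  (#|[set k | ~~ precedes i k & lam k < lam i]| <= 1)%N.
Proof.
move=> iL.
have is_skipped k : ~~ precedes i k -> (lam k < lam i)%N -> Some k = skipped.
  move=> nc lt; case: (boolP (k \in LM)) => kL.
    move: nc; rewrite /precedes kL /= -leqNgt => tk.
    by move: lt; rewrite ltnNge (lam_sorted iL kL tk).
  apply/eqP; apply: contraTT lt => nz; rewrite -leqNgt; exact: lam_min.
apply/card_le1_eqP => k1 k2; rewrite !inE => /andP[n1 l1] /andP[n2 l2].
by move: (is_skipped _ n1 l1); rewrite -(is_skipped _ n2 l2) => -[].
Qed.

Lemma balanced_add : balanced P lam -> balanced P lam'.
Proof.
move=> bal i S iS.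
have lam_le k : (lam k <= lam' k)%N by rewrite lam'E leq_addr.
case: (boolP (i \in LM)) => iL; last first.
  rewrite lam'E (negbTE iL) addn0; apply: leq_trans (bal i S iS) _.
  by rewrite leq_add2r; apply: leq_sum => k _.
pose low k := precedes i k || (lam k < lam i)%N.
pose Low := [set k in S | low k]; pose High := [set k in S | ~~ low k].
pose Pre := [set k in Low | precedes i k].
pose Late := [set k in Low | ~~ precedes i k].
have cardS : #|S| = (#|Low| + #|High|)%N.
  by rewrite -(cardID [set k | low k] S); congr (_ + _)%N; apply: eq_card => k;
    rewrite !inE andbC.
have cardLow : #|Low| = (#|Pre| + #|Late|)%N.
  by rewrite -(cardID [set k | precedes i k] Low); congr (_ + _)%N;
    apply: eq_card => k; rewrite !inE andbC.
have cardLate : (#|Late| <= 1)%N.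
  have sub : Late \subset [set k | ~~ precedes i k & lam k < lam i].
    apply/subsetP => k; rewrite !inE /low => /andP[/andP[_ ck] nk].
    by rewrite nk; move: ck; rewrite (negbTE nk).
  exact: leq_trans (subset_leq_card sub) (card_lighter_not_preceding iL).
have sum_split : (\sum_(k in S) lam' k =
    \sum_(k in Pre) lam' k + \sum_(k in Late) lam' k + \sum_(k in High) lam' k)%N.
  rewrite (bigID low) (bigID (precedes i)) /=.
  by congr (_ + _ + _)%N; apply: eq_bigl => k; rewrite !inE // andbA.
have sumLow : (\sum_(k in Low) lam k =
    \sum_(k in Pre) lam k + \sum_(k in Late) lam k)%N.
  by rewrite (bigID (precedes i)) /=; congr (_ + _)%N; apply: eq_bigl => k;
    rewrite !inE.
have bPre : (\sum_(k in Pre) lam k + #|Pre| * x i <= \sum_(k in Pre) lam' k)%N.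
  rewrite -sum_nat_const -big_split /=; apply: leq_sum => k.
  rewrite !inE /precedes => /andP[_ /andP[kL kt]].
  by rewrite lam'E kL leq_add2l x_sorted // ltnW.
have bLate : (\sum_(k in Late) lam k <= \sum_(k in Late) lam' k)%N by apply: leq_sum.
have bHigh : (#|High| * lam i <= \sum_(k in High) lam' k)%N.
  rewrite -sum_nat_const; apply: leq_sum => k; rewrite !inE /low negb_or -leqNgt.
  by move=> /andP[_ /andP[_ le]]; exact: leq_trans le (lam_le k).
have iLow : i \notin Low by rewrite inE (negbTE iS).
rewrite cardS lam'E iL.
apply: (@balanced_split_arith #|Low| #|High| #|Pre| (lam i) (x i) P (\sum_(k in Low) lam k)).
- by rewrite cardLow leq_add2l.
- exact: x_bounded.
- by rewrite cardLow leq_addr.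
- exact: bal.
- rewrite sum_split sumLow; lia.
Qed.

End BalancedAdd.

Lemma balanced_assign n m (p : 'I_n -> nat) (P : nat)
    (a a' : {ffun 'I_n -> option 'I_m}) (LJ : seq 'I_n) (LM : seq 'I_m)
    (skipped : option 'I_m) :
  (forall l, (p l <= P)%N) ->
  uniq LJ -> sorted (fun x y => p y <= p x)%N LJ ->
  uniq LM -> sorted (fun i j => load p a i <= load p a j)%N LM ->
  (size LM <= size LJ)%N ->
  (forall l, l \in LJ -> a l = None) ->
  (forall k k', k \in LM -> k' \notin LM -> Some k' != skipped ->
     (load p a k <= load p a k')%N) ->
  a' = [ffun l => if l \in take (size LM) LJ
                  then nth None (map Some LM) (index l LJ) else a l] ->
  balanced P (load p a) -> balanced P (load p a').
Proof.
move=> pP uJ sJ uM sM sz fresh lam_min -> bal.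
have sJ' : sorted (fun x y => y <= x)%N (map p LJ) by rewrite sorted_map.
apply: (@balanced_add m P (load p a) _ (fun k => nth 0 (map p LJ) (index k LM))
  LM skipped) => //.
- move=> k k' kM k'M le.
  have := @sorted_leq_nth _ (fun i j => load p a i <= load p a j)%N
    (fun _ _ _ => @leq_trans _ _ _) (fun _ => leqnn _) k LM sM.
  by move=> /(_ (index k LM) (index k' LM)); rewrite !inE !index_mem !nth_index //; apply.
- move=> k _; case: (ltnP (index k LM) (size (map p LJ))) => h.
    by have /mapP[l _ ->] := mem_nth 0 h.
  by rewrite nth_default.
- move=> k k' kM k'M le.
  have := sorted_leq_nth (fun x y z h1 h2 => leq_trans h2 h1) (fun x => leqnn _) 0 sJ'.
  move=> /(_ (index k LM) (index k' LM)); rewrite !inE size_map; apply => //.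
    by apply: leq_trans sz; rewrite index_mem.
  by apply: leq_trans sz; rewrite index_mem.
- by move=> k; rewrite load_assign.
Qed.

Lemma greedy_step_support n m (p : 'I_n -> nat) (a a' : {ffun 'I_n -> option 'I_m})
    (B : {set 'I_n}) (pu : option 'I_n) :
  greedy_step p a a' B pu -> forall l, a' l != None -> a l != None \/ l \in B.
Proof.
move=> [LJ [LM [pJ _ _ _ ->]]] l; rewrite ffunE.
case: ifP => [/mem_take lJ _|_]; [right | by left].
rewrite -mem_enum -(perm_mem pJ); move: lJ.
by case: pu => [u|] //; case: (a u) => [M'|] // /mem_rem.
Qed.

Definition drop_machine m (M' : 'I_m) (LM : seq 'I_m) : seq 'I_m :=
  if M' \in LM then rem M' LM else take (size LM).-1 LM.

Lemma balanced_assign_drop n m (p : 'I_n -> nat) (P : nat)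
    (a a' : {ffun 'I_n -> option 'I_m}) (LJ : seq 'I_n) (LM : seq 'I_m)
    (u : 'I_n) (M' : 'I_m) :
  (forall l, (p l <= P)%N) ->
  uniq LJ -> sorted (fun x y => p y <= p x)%N LJ ->
  uniq LM -> sorted (fun i j => load p a i <= load p a j)%N LM ->
  size LM = size LJ ->
  (forall l, l \in rem u LJ -> a l = None) ->
  (forall k k', k \in LM -> k' \notin LM -> (load p a k <= load p a k')%N) ->
  a' = [ffun l => if l \in take (size (drop_machine M' LM)) (rem u LJ)
                  then nth None (map Some (drop_machine M' LM)) (index l (rem u LJ))
                  else a l] ->
  balanced P (load p a) -> balanced P (load p a').
Proof.
move=> pP uJ sJ uM sM szM fresh minM.
have sJ' : sorted (fun x y => p y <= p x)%N (rem u LJ).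
  by apply: (subseq_sorted _ (rem_subseq u LJ) sJ) => x y z h1 h2; exact: leq_trans h2 h1.
have szJ' : ((size LJ).-1 <= size (rem u LJ))%N.
  by case: (boolP (u \in LJ)) => uL; [rewrite size_rem | rewrite rem_id // leq_pred].
rewrite /drop_machine; case: ifP => M'L.
  apply: (balanced_assign pP (rem_uniq u uJ) sJ' (rem_uniq _ uM) _ _ fresh).
  - by apply: (subseq_sorted _ (rem_subseq M' LM) sM) => ? ? ?; exact: leq_trans.
  - by rewrite size_rem // szM.
  - move=> k k' kM k'M ne; apply: minM; first exact: mem_rem kM.
    apply: contra k'M => k'L; rewrite (mem_rem_uniq _ uM) inE k'L andbT.
    by apply: contra ne => /eqP ->.
apply: (balanced_assign (skipped := Some (nth M' LM (size LM).-1)) pP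
  (rem_uniq u uJ) sJ' (take_uniq _ uM) _ _ fresh).
- by apply: (subseq_sorted _ (take_subseq LM _) sM) => ? ? ?; exact: leq_trans.
- by rewrite size_take_min szM geq_min szJ'.
- move=> k k' kM k'M ne; apply: minM; first exact: mem_take kM.
  apply/negP => k'L; move: k'M; rewrite in_take // -leqNgt => le.
  have ilt : (index k' LM < size LM)%N by rewrite index_mem.
  have e : index k' LM = (size LM).-1 by move: le ilt; clear; case: (size LM) => //= s; lia.
  by move: ne; rewrite -e nth_index // eqxx.
Qed.

Lemma balanced_greedy_step n m (p : 'I_n -> nat) (P : nat)
    (a a' : {ffun 'I_n -> option 'I_m}) (B : {set 'I_n}) (pu : option 'I_n) :
  (forall l, (p l <= P)%N) ->
  (forall l, l \in B -> a l != None -> pu = Some l) ->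
  greedy_step p a a' B pu ->
  balanced P (load p a) -> balanced P (load p a').
Proof.
move=> pP fr [LJ [LM [pJ sJ [uM szM minM] sM Ha']]].
have uJ : uniq LJ by rewrite (perm_uniq pJ) enum_uniq.
have memJ : LJ =i B by move=> l; rewrite (perm_mem pJ) mem_enum.
have szJ : size LM = size LJ by rewrite szM (perm_size pJ) cardE.
have fresh_except l : l \in LJ -> a l != None -> pu = Some l.
  by move=> lJ; apply: fr; rewrite -memJ.
have all_fresh : (forall l, pu <> Some l \/ a l = None) -> forall l, l \in LJ -> a l = None.
  move=> hpu l lJ; case al: (a l) => [M|] //.
  by case: (hpu l) => [[]|]; [apply: fresh_except; rewrite ?al | rewrite al].
have plain : (forall l, l \in LJ -> a l = None) ->
    a' = [ffun l => if l \in take (size LM) LJ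
                    then nth None (map Some LM) (index l LJ) else a l] ->
    balanced P (load p a) -> balanced P (load p a').
  move=> frJ; apply: (balanced_assign (skipped := None) pP uJ sJ uM sM _ frJ).
    by rewrite szJ.
  by move=> k k' kM k'M _; exact: minM.
move: Ha'; case: pu fr fresh_except all_fresh => [u|] _ fresh_except all_fresh; last first.
  by apply: plain; apply: all_fresh; left.
case au: (a u) => [M'|] /=.
  apply: (balanced_assign_drop pP uJ sJ uM sM szJ _ minM) => l.
  rewrite (mem_rem_uniq _ uJ) inE => /andP[lu lJ]; case al: (a l) => [M|] //.
  have [ul] : Some u = Some l by apply: fresh_except; rewrite ?al.
  by move: lu; rewrite ul eqxx.
apply: plain; apply: all_fresh => l.
by case: (eqVneq u l) => [<-|ne]; [right | left => -[/eqP]; rewrite (negbTE ne)].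
Qed.

Lemma mem_block_order n (s : seq (bcnode n)) B : B \in block_order s -> inl B \in s.
Proof. by rewrite /block_order mem_pmap => /mapP [[B'|v] Bs] //= [->]. Qed.

Lemma block_order_uniq n (s : seq (bcnode n)) : uniq s -> uniq (block_order s).
Proof. by apply: (pmap_uniq (g := fun B => inl B)) => -[B|v]. Qed.

Lemma index_block_order_lt n (s : seq (bcnode n)) j1 j2 : uniq s ->
  (j1 < j2)%N -> (j2 < size (block_order s))%N ->
  (index (inl (nth set0 (block_order s) j1)) s
     < index (inl (nth set0 (block_order s) j2)) s)%N.
Proof.
elim: s j1 j2 => [|x s IHs] j1 j2 //= /andP[xs us].
have x_neq j : (j < size (block_order s))%N ->
    (x == inl (nth set0 (block_order s) j)) = false.
  move=> hj; apply/negbTE; apply: contra xs => /eqP ->.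
  by apply: mem_block_order; exact: mem_nth.
case: x xs x_neq => [B|v] xs x_neq /=; last exact: IHs.
case: j1 j2 => [|j1] [|j2] //= lt lt2; first by rewrite eqxx (x_neq _ lt2).
by rewrite (x_neq _ lt2) (x_neq _ (ltn_trans lt lt2)) ltnS; apply: IHs.
Qed.

(* A vertex shared by block [j] and an earlier block is a cut-vertex adjacent
   to both in the block-cut forest; were it not the parent of block [j], block
   [j] would be a descendant of the earlier block and precede it in [s]. *)
Lemma preorder_shared_parent_cv n (e : rel 'I_n) par s j' j l :
  rooting e par -> preorder e par s ->
  (j' < j)%N -> (j < size (block_order s))%N ->
  l \in nth set0 (block_order s) j' -> l \in nth set0 (block_order s) j ->
  parent_cv par (nth set0 (block_order s) j) = Some l.
Proof.
move=> [_ tree_edge _] [us mems Hpre] ltj lj l1 l2.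
set bo := block_order s in lj l1 l2 *.
set B1 := nth set0 bo j' in l1 *; set B2 := nth set0 bo j in l2 *.
have lj' := ltn_trans ltj lj.
have B1s : inl B1 \in s by apply: mem_block_order; exact: mem_nth.
have B2s : inl B2 \in s by apply: mem_block_order; exact: mem_nth.
have neqB : B1 != B2 by rewrite nth_uniq ?block_order_uniq // neq_ltn ltj.
have v1 : bc_valid e (inl B1) by rewrite -mems.
have v2 : bc_valid e (inl B2) by rewrite -mems.
have cv : bc_valid e (inr l).
  have sub : [set B1; B2] \subset [set B : {set 'I_n} | block e B && (l \in B)].
    by apply/subsetP => B; rewrite !inE => /orP[] /eqP ->; apply/andP; split.
  by apply: leq_trans (subset_leq_card sub); rewrite cards2 neqB.
case: (tree_edge (inl B2) (inr l) v2 cv l2) => h2; first by rewrite /parent_cv h2.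
case: (tree_edge (inl B1) (inr l) v1 cv l1) => h1; last first.
  by move: h1; rewrite h2 => -[] e12; move: neqB; rewrite e12 eqxx.
have desc : descendant par (inl B2) (inl B1) by exists 2; rewrite /= h1 /= h2.
have [first_in_subtree _] := Hpre (inl B2) B2s.
have := first_in_subtree (index (inl B1) s).
rewrite index_mem nth_index // => /(_ B1s desc).
by rewrite leqNgt index_block_order_lt.
Qed.

Lemma greedy_run_support n m (p : 'I_n -> nat) par (s : seq (bcnode n))
    (st : nat -> {ffun 'I_n -> option 'I_m}) :
  greedy_run p par s st -> forall j, (j <= size (block_order s))%N ->
  forall l, st j l != None ->
    exists2 j', (j' < j)%N & l \in nth set0 (block_order s) j'.
Proof.
move=> [h0 hstep]; elim => [|j IH] hj l; first by rewrite h0 ffunE.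
case/(greedy_step_support (hstep j hj)) => [/(IH (ltnW hj)) [j' lt lB]|lB].
  by exists j' => //; exact: ltnW.
by exists j.
Qed.

Lemma greedy_run_balanced n m (e : rel 'I_n) (p : 'I_n -> nat) par s
    (st : nat -> {ffun 'I_n -> option 'I_m}) (P : nat) :
  rooting e par -> preorder e par s -> greedy_run p par s st ->
  (forall l, (p l <= P)%N) ->
  forall j, (j <= size (block_order s))%N -> balanced P (load p (st j)).
Proof.
move=> hr hs hrun pP; elim => [|j IH] hj.
  move=> i S _; rewrite /load hrun.1 big1 ?muln0 // => l.
  by rewrite ffunE.
apply: (balanced_greedy_step pP _ (hrun.2 j hj) (IH (ltnW hj))).
move=> l lB /(greedy_run_support hrun (ltnW hj)) [j' lt lB'].
exact: (preorder_shared_parent_cv hr hs lt hj lB' lB).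
Qed.

Lemma balanced_rearrange (m L R P : nat) :
  (m.-2 * L <= R + m.-2 * P)%N ->
  (m * L <= L + R + maxn (L + R) (m * P))%N.
Proof.
case: m => [|[|[|k]]] //= bal; try lia.
(* Scale the hypothesis by [m] or by [m - 1], according to which argument
   realises the [maxn]. *)
case: (leqP (k.+3 * P) (L + R)) => hc.
  have : (k.+3 * (k.+1 * L) <= k.+3 * R + k.+1 * (k.+3 * P))%N.
    by rewrite [X in (_ <= _ + X)%N]mulnCA -mulnDr leq_pmul2l.
  nia.
have : (k.+2 * (k.+1 * L) <= k.+2 * R + k.+1 * (k.+2 * P))%N.
  by rewrite [X in (_ <= _ + X)%N]mulnCA -mulnDr leq_pmul2l.
nia.
Qed.

Lemma balanced_le_total_add_max m P (lam : 'I_m -> nat) i :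
  balanced P lam ->
  (m * lam i <= \sum_k lam k + maxn (\sum_k lam k) (m * P))%N.
Proof.
move=> bal; rewrite (bigD1 i) //=; apply: balanced_rearrange.
have := bal i [set~ i]; rewrite in_setC1 eqxx cardsC1 card_ord => /(_ isT).
by congr (_ <= _ + _)%N; apply: eq_bigl => k; rewrite in_setC1.
Qed.

Local Open Scope ring_scope.

Lemma le_mean_add_max (R : realFieldType) (m L T P : nat) : (0 < m)%N ->
  (m * L <= T + maxn T (m * P))%N ->
  L%:R <= T%:R / m%:R + Num.max (T%:R / m%:R) P%:R :> R.
Proof.
move=> m_gt0 bound; have m_pos : 0 < m%:R :> R by rewrite ltr0n.
apply: le_trans (_ : (T + maxn T (m * P))%:R / m%:R <= _).
  by rewrite ler_pdivlMr // -natrM ler_nat mulnC.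
rewrite natrD mulrDl lerD2l -maxEnat natr_max natrM maxr_pMl ?invr_ge0 ?ler0n //.
by rewrite [_ * P%:R]mulrC mulfK ?gt_eqF.
Qed.

Theorem lemma1 (n m : nat) (e : rel 'I_n) (p : 'I_n -> nat)
    (e_sym : symmetric e) (e_irr : irreflexive e)
    (hbg : block_graph e)
    (homega : forall S : {set 'I_n}, clique e S -> (#|S| <= m)%N)
    (par : bcnode n -> option (bcnode n)) (hpar : rooting e par)
    (s : seq (bcnode n)) (hs : preorder e par s)
    (st : nat -> {ffun 'I_n -> option 'I_m}) (hrun : greedy_run p par s st) :
  forall (i : 'I_m) (j : nat), (j <= size (block_order s))%N ->
    let Cj : rat := (\sum_(i0 < m) load p (st j) i0)%:R / m%:R in
    (load p (st j) i)%:R <= Cj + Num.max Cj (\max_(l < n) p l)%:R.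
Proof.
(* The block-graph and clique-size hypotheses only ensure that the greedy steps
   exist, which [hrun] already provides. *)
move=> i j hj /=.
have p_le_max l : (p l <= \max_(l0 < n) p l0)%N by exact: leq_bigmax.
apply: le_mean_add_max; first exact: leq_ltn_trans (leq0n i) (ltn_ord i).
exact: balanced_le_total_add_max (greedy_run_balanced hpar hs hrun p_le_max hj).
Qed.
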